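(* Consider a problem with $m=2$ worker nodes and a DPM algorithm as described in the context. If the odd-even preserving property holds, then the output solution $x^t$ generated by the DPM algorithm after $t$ communication rounds satisfies $x^t\in K_{\lceil t/2\rceil+2}$.
   Context: Problem data: $X\subseteq\mathbb{R}^n$, $u$, and for worker $i$ a matrix $A_i$, set $\Pi_i$ and function $f_i^*$ (with $f_i(x)=\max_{\pi_i\in\Pi_i}\langle A_ix,\pi_i\rangle-f_i^*(\pi_i)$). A DPM (distributed prox mapping) algorithm maintains a server memory $\mathcal M_s^t$, and for each worker $i$ a primal memory $\mathcal M_i^t$ and a dual memory $\mathcal M_i^{\pi,t}$, all equal to $\{0\}$ at $t=0$. In round $t\ge1$: $\mathcal M_s^t=\mathcal M_s^{t,cp}\cup\mathcal M_s^{t,cm}$, $\mathcal M_i^t=\mathcal M_i^{t,cp}\cup\mathcal M_i^{t,cm}$, $\mathcal M_i^{\pi,t}=\mathcal M_i^{\pi,t,cp}$, where: (communication) $\mathcal M_s^{t,cm}=\{y_i:i\in[m]\}$ with $y_i\in\mathrm{span}(\mathcal M_i^{t-1})$, and $\mathcal M_i^{t,cm}$ consists of one vector in $\mathrm{span}(\mathcal M_s^{t-1})$; (worker computation) starting from $\mathcal M_i^{t,0}=\mathcal M_i^{t-1}$, $\mathcal M_i^{\pi,t,0}=\mathcal M_i^{\pi,t-1}$, for $l=1,\dots,L$ ($L\ge0$ arbitrary) pick $\bar x\in\mathrm{span}(\mathcal M_i^{t,l-1})$, $\bar\pi_i\in\mathrm{span}(\mathcal M_i^{\pi,t,l-1})$,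 $\tau\ge0$, and $\pi_i^{t,l}\in\arg\max_{\pi_i\in\Pi_i}\langle A_i\bar x,\pi_i\rangle-f_i^*(\pi_i)-\frac\tau2\|\pi_i-\bar\pi_i\|^2$, and set $\mathcal M_i^{t,l}=\mathcal M_i^{t,l-1}\cup\{A_i^\top\pi_i^{t,l},A_i^\top\bar\pi_i\}$, $\mathcal M_i^{\pi,t,l}=\mathcal M_i^{\pi,t,l-1}\cup\{\pi_i^{t,l},A_i\bar x\}$; then $\mathcal M_i^{t,cp}=\mathcal M_i^{t,L}$, $\mathcal M_i^{\pi,t,cp}=\mathcal M_i^{\pi,t,L}$; (server computation) starting from $\mathcal M_s^{t,0}=\mathcal M_s^{t-1}$, for $l=1,\dots,L$ pick $\bar x\in\mathrm{span}(\mathcal M_s^{t,l-1})$, $\eta>0$, and add $x_s^l=\arg\min_{x\in X}u(x)+\frac\eta2\|x-\bar x\|^2$; $\mathcal M_s^{t,cp}=\mathcal M_s^{t,L}$. The output after $t$ rounds is some $x^t\in\mathrm{span}(\bigcup_i\mathcal M_i^t\cup\mathcal M_s^t)$. Let $K_j=\{x\in\mathbb{R}^n:x_l=0\ \forall l>j\}$. With two workers, the problem is odd-even preserving if for any DPM algorithm: $\mathcal M_1^0\cup\mathcal M_2^0\cup\mathcal M_s^0\subset K_2$; for every $i\ge2$ and $t\ge1$: if $\mathcal M_1^{t-1}\subset K_i$ then $\mathcal M_1^{t,cp}\subset K_i$ when $i$ is even and $\mathcal M_1^{t,cp}\subset K_{i+1}$ when $i$ is odd; if $\mathcal M_2^{t-1}\subset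 K_i$ then $\mathcal M_2^{t,cp}\subset K_{i+1}$ when $i$ is even and $\mathcal M_2^{t,cp}\subset K_i$ when $i$ is odd; and if $\mathcal M_s^{t-1}\subset K_i$ then $\mathcal M_s^{t,cp}\subset K_i$. *)

From HB Require Import structures.
From mathcomp Require Import all_boot all_order all_algebra.
From mathcomp Require Import boolp classical_sets reals.
Unset Printing Implicit Defensive.
Import Order.TTheory GRing.Theory Num.Theory.
Local Open Scope ring_scope.
Local Open Scope classical_set_scope.

Definition dotv {R : realType} {k : nat} (x y : 'cV[R]_k) : R :=
  \sum_(j < k) x j 0 * y j 0.
Definition sqnorm {R : realType} {k : nat} (x : 'cV[R]_k) : R := dotv x x.

(* Linear span of an arbitrary set of vectors: all vectors lying in the span
   of some finite list of its elements (span of the empty set is {0}). *)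
Definition span {R : realType} {k : nat} (S : set 'cV[R]_k) : set 'cV[R]_k :=
  [set v | exists s : seq 'cV[R]_k, (forall w, w \in s -> S w) /\ v \in <<s>>%VS].

(* K_j = { x in R^n : x_l = 0 for all l > j }, coordinates numbered 1..n in
   the paper; the 0-based coordinate l : 'I_n is the paper's l+1. *)
Definition Kset (R : realType) (n : nat) (j : nat) : set 'cV[R]_n :=
  [set x | forall l : 'I_n, (j <= l)%N -> x l 0 = 0].

Definition is_argmax {R : realType} {T : Type} (D : set T) (g : T -> R) (x : T) :=
  D x /\ forall y, D y -> g y <= g x.
Definition is_argmin {R : realType} {T : Type} (D : set T) (g : T -> R) (x : T) :=
  D x /\ forall y, D y -> g x <= g y.

Record problem (R : realType) (n m : nat) := Problem {
  pX : set 'cV[R]_n;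
  pu : 'cV[R]_n -> R;
  pdim : 'I_m -> nat;
  pA : forall i : 'I_m, 'M[R]_(pdim i, n);
  pPi : forall i : 'I_m, set 'cV[R]_(pdim i);
  pfstar : forall i : 'I_m, 'cV[R]_(pdim i) -> R }.
Arguments pX {R n m}. Arguments pu {R n m}. Arguments pdim {R n m}.
Arguments pA {R n m}. Arguments pPi {R n m}. Arguments pfstar {R n m}.

(* A DPM algorithm (one run of it) for problem P.  Round t+1 of the paper is
   index t.+1 here; the number of computation steps L may depend on the
   round and on the node. *)
Record DPM (R : realType) (n m : nat) (P : problem R n m) := MkDPM {
  Ms : nat -> set 'cV[R]_n;
  Mw : 'I_m -> nat -> set 'cV[R]_n;
  Mpi : forall i : 'I_m, nat -> set 'cV[R]_(pdim P i);
  Ms_cp : nat -> set 'cV[R]_n;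
  Ms_cm : nat -> set 'cV[R]_n;
  Mw_cp : 'I_m -> nat -> set 'cV[R]_n;
  Mw_cm : 'I_m -> nat -> set 'cV[R]_n;
  Mpi_cp : forall i : 'I_m, nat -> set 'cV[R]_(pdim P i);
  Ls : nat -> nat;
  Lw : 'I_m -> nat -> nat;
  Ms_st : nat -> nat -> set 'cV[R]_n;
  Mw_st : 'I_m -> nat -> nat -> set 'cV[R]_n;
  Mpi_st : forall i : 'I_m, nat -> nat -> set 'cV[R]_(pdim P i);
  xout : nat -> 'cV[R]_n;
  Ms_init : Ms 0 = [set 0];
  Mw_init : forall i : 'I_m, Mw i 0 = [set 0];
  Mpi_init : forall i : 'I_m, Mpi i 0 = [set 0];
  Ms_round : forall t, Ms t.+1 = Ms_cp t.+1 `|` Ms_cm t.+1;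
  Mw_round : forall (i : 'I_m) (t : nat), Mw i t.+1 = Mw_cp i t.+1 `|` Mw_cm i t.+1;
  Mpi_round : forall (i : 'I_m) (t : nat), Mpi i t.+1 = Mpi_cp i t.+1;
  Ms_comm : forall t, exists y : 'I_m -> 'cV[R]_n,
      (forall i, span (Mw i t) (y i)) /\ Ms_cm t.+1 = range y;
  Mw_comm : forall (i : 'I_m) (t : nat), exists z : 'cV[R]_n,
      span (Ms t) z /\ Mw_cm i t.+1 = [set z];
  Mw_st0 : forall (i : 'I_m) (t : nat), Mw_st i t.+1 0 = Mw i t;
  Mpi_st0 : forall (i : 'I_m) (t : nat), Mpi_st i t.+1 0 = Mpi i t;
  w_step : forall (i : 'I_m) (t l : nat), (l < Lw i t.+1)%N ->
    exists (xbar : 'cV[R]_n) (pibar pinew : 'cV[R]_(pdim P i)) (tau : R),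
      [/\ span (Mw_st i t.+1 l) xbar, span (Mpi_st i t.+1 l) pibar, 0 <= tau,
          is_argmax (pPi P i)
            (fun p => dotv (pA P i *m xbar) p - pfstar P i p
                      - tau / 2 * sqnorm (p - pibar)) pinew &
          Mw_st i t.+1 l.+1 = Mw_st i t.+1 l
              `|` [set (pA P i)^T *m pinew] `|` [set (pA P i)^T *m pibar] /\
          Mpi_st i t.+1 l.+1 = Mpi_st i t.+1 l
              `|` [set pinew] `|` [set pA P i *m xbar]];
  Mw_cpE : forall (i : 'I_m) (t : nat), Mw_cp i t.+1 = Mw_st i t.+1 (Lw i t.+1);
  Mpi_cpE : forall (i : 'I_m) (t : nat), Mpi_cp i t.+1 = Mpi_st i t.+1 (Lw i t.+1);
  Ms_st0 : forall t, Ms_st t.+1 0 = Ms t;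
  s_step : forall t l, (l < Ls t.+1)%N ->
    exists (xbar xs : 'cV[R]_n) (eta : R),
      [/\ span (Ms_st t.+1 l) xbar, 0 < eta,
          is_argmin (pX P) (fun x => pu P x + eta / 2 * sqnorm (x - xbar)) xs &
          Ms_st t.+1 l.+1 = Ms_st t.+1 l `|` [set xs]];
  Ms_cpE : forall t, Ms_cp t.+1 = Ms_st t.+1 (Ls t.+1);
  xout_span : forall t, span ((\bigcup_i Mw i t) `|` Ms t) (xout t)
}.
Arguments Ms {R n m P}.
Arguments Mw {R n m P}.
Arguments Mpi {R n m P}.
Arguments Ms_cp {R n m P}.
Arguments Ms_cm {R n m P}.
Arguments Mw_cp {R n m P}.
Arguments Mw_cm {R n m P}.
Arguments Mpi_cp {R n m P}.
Arguments Ls {R n m P}.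
Arguments Lw {R n m P}.
Arguments Ms_st {R n m P}.
Arguments Mw_st {R n m P}.
Arguments Mpi_st {R n m P}.
Arguments xout {R n m P}.
Arguments DPM {R n m}.

(* Odd-even preserving property for two workers (worker 1 = ord0,
   worker 2 = ord_max). *)
Definition odd_even_preserving {R : realType} {n : nat} (P : problem R n 2) :=
  forall D : DPM P,
    (Mw D ord0 0 `|` Mw D ord_max 0 `|` Ms D 0) `<=` Kset R n 2 /\
    forall j t : nat, (2 <= j)%N -> (1 <= t)%N ->
      [/\ (Mw D ord0 t.-1 `<=` Kset R n j ->
            Mw_cp D ord0 t `<=` Kset R n (if ~~ odd j then j else j.+1)),
          (Mw D ord_max t.-1 `<=` Kset R n j ->
            Mw_cp D ord_max t `<=` Kset R n (if ~~ odd j then j.+1 else j)) &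
          (Ms D t.-1 `<=` Kset R n j -> Ms_cp D t `<=` Kset R n j)].

From Pilot Require Import Defs.
From mathcomp Require Import all_boot all_algebra.
From mathcomp Require Import classical_sets reals.
From mathcomp Require Import zify.
Import GRing.Theory.
Local Open Scope ring_scope.
Local Open Scope classical_set_scope.

#[local] Arguments Ms_comm {R n m P}.
#[local] Arguments Mw_comm {R n m P}.
#[local] Arguments xout_span {R n m P}.

(* Every memory is built from spans of memories of the previous round, and each
   K_j is a subspace, so a bound on the support of all memories bounds that of
   the output.  Within a round a node's own computation pushes its support only
   to an even (worker 1) or odd (worker 2) index, and new coordinates reach the
   other nodes only through communication.  Starting from all memories in K_j,
   one round leaves one worker and the server in K_j and the other worker in
   K_(j+1); the second round spreads K_(j+1) to everyone.  Hence two rounds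
   advance the support by exactly one coordinate. *)

Lemma ord2_cases (i : 'I_2) : i = ord0 \/ i = ord_max.
Proof. by case: i => [[|[|//]] ?]; [left | right]; apply: val_inj. Qed.

Section Kset_subspace.
Context {R : realType} {n : nat}.
Local Notation K := (Kset R n).

Lemma Kset_mono j j' : (j <= j')%N -> K j `<=` K j'.
Proof. by move=> jj' x Kx l jl; apply: Kx; apply: leq_trans jl. Qed.

Lemma Kset0 j : K j 0.
Proof. by move=> l _; rewrite mxE. Qed.

Lemma KsetD j x y : K j x -> K j y -> K j (x + y).
Proof. by move=> Kx Ky l jl; rewrite mxE Kx // Ky // addr0. Qed.

Lemma KsetZ j (a : R) x : K j x -> K j (a *: x).
Proof. by move=> Kx l jl; rewrite mxE Kx // mulr0. Qed.

Lemma span_Kset j (S : set 'cV[R]_n) : S `<=` K j -> Defs.span S `<=` K j.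
Proof.
move=> SK v [s [sS]]; elim: s sS v => [|x s IHs] sS v.
  by rewrite span_nil memv0 => /eqP ->; apply: Kset0.
rewrite span_cons => /memv_addP [_ /vlineP [a ->] [w sw ->]].
apply: KsetD; first by apply/KsetZ/SK/sS; rewrite mem_head.
by apply: IHs sw => y sy; apply: sS; rewrite in_cons sy orbT.
Qed.

End Kset_subspace.

Arguments span_Kset {R n j S}.

Definition round_up_even (j : nat) := if ~~ odd j then j else j.+1.
Definition round_up_odd (j : nat) := if ~~ odd j then j.+1 else j.

Section Memories.
Variables (R : realType) (n : nat) (P : problem R n 2) (D : DPM P).
Local Notation K := (Kset R n).

Definition memories_in t a b c :=
  [/\ Mw D ord0 t `<=` K a, Mw D ord_max t `<=` K b & Ms D t `<=` K c].

Lemma memories_in_mono t a b c a' b' c' :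
  (a <= a')%N -> (b <= b')%N -> (c <= c')%N ->
  memories_in t a b c -> memories_in t a' b' c'.
Proof.
move=> aa' bb' cc' [M1 M2 Ms]; split.
- by move=> x /M1; apply: Kset_mono.
- by move=> x /M2; apply: Kset_mono.
- by move=> x /Ms; apply: Kset_mono.
Qed.

Lemma xout_Kset t j : memories_in t j j j -> K j (xout D t).
Proof.
move=> [M1 M2 Ms]; apply: span_Kset (xout_span D t) => x [[i _]|/Ms //].
by case: (ord2_cases i) => ->; [apply: M1 | apply: M2].
Qed.

Hypothesis oep : odd_even_preserving P.

Lemma memories_in0 : memories_in 0 2 2 2.
Proof.
have [M0 _] := oep D.
by split=> x Mx; apply: M0; [left; left | left; right | right].
Qed.

Lemma memories_in_round {t a b c} :
  (2 <= a)%N -> (2 <= b)%N -> (2 <= c)%N -> memories_in t a b c ->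
  memories_in t.+1 (maxn (round_up_even a) c) (maxn (round_up_odd b) c)
                   (maxn c (maxn a b)).
Proof.
move=> a2 b2 c2 [M1 M2 Ms].
have [_ step] := oep D.
have [cp1 _ _] := step a t.+1 a2 isT.
have [_ cp2 _] := step b t.+1 b2 isT.
have [_ _ cps] := step c t.+1 c2 isT.
have cm_w i : Mw_cm D i t.+1 `<=` K c.
  have [z [sz ->]] := Mw_comm D i t.
  by move=> _ ->; apply: span_Kset sz.
have cm_s : Ms_cm D t.+1 `<=` K (maxn a b).
  have [y [sy ->]] := Ms_comm D t.
  move=> _ [i _ <-]; apply: span_Kset (sy i) => x.
  case: (ord2_cases i) => -> Mx.
  - by apply: Kset_mono (leq_maxl a b) _ _; apply: M1.
  - by apply: Kset_mono (leq_maxr a b) _ _; apply: M2.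
split; rewrite ?Mw_round ?Ms_round subUset; split.
- by move=> x /(cp1 M1); apply: Kset_mono; apply: leq_maxl.
- by move=> x /cm_w; apply: Kset_mono; apply: leq_maxr.
- by move=> x /(cp2 M2); apply: Kset_mono; apply: leq_maxl.
- by move=> x /cm_w; apply: Kset_mono; apply: leq_maxr.
- by move=> x /(cps Ms); apply: Kset_mono; apply: leq_maxl.
- by move=> x /cm_s; apply: Kset_mono; apply: leq_maxr.
Qed.

Lemma memories_in_round_coarse {t j} :
  (2 <= j)%N -> memories_in t j j j -> memories_in t.+1 j.+1 j.+1 j.+1.
Proof.
move=> j2 /(memories_in_round j2 j2 j2).
by rewrite /round_up_even /round_up_odd; case: (odd j) => /=; apply: memories_in_mono; lia.
Qed.

Lemma memories_in_two_rounds {t j} :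
  (2 <= j)%N -> memories_in t j j j -> memories_in t.+2 j.+1 j.+1 j.+1.
Proof.
move=> j2 /(memories_in_round j2 j2 j2).
have j12 : (2 <= j.+1)%N by lia.
rewrite /round_up_even /round_up_odd; case oj: (odd j) => /= M1.
- have {}M1 : memories_in t.+1 j.+1 j j by apply: memories_in_mono M1; lia.
  apply: memories_in_mono (memories_in_round j12 j2 j2 M1);
    rewrite /round_up_even /round_up_odd /= ?oj /=; lia.
- have {}M1 : memories_in t.+1 j j.+1 j by apply: memories_in_mono M1; lia.
  apply: memories_in_mono (memories_in_round j2 j12 j2 M1);
    rewrite /round_up_even /round_up_odd /= ?oj /=; lia.
Qed.

Lemma memories_in_uphalf t :
  memories_in t (uphalf t + 2) (uphalf t + 2) (uphalf t + 2).
Proof.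
suff: memories_in t (uphalf t + 2) (uphalf t + 2) (uphalf t + 2) /\
      memories_in t.+1 (uphalf t.+1 + 2) (uphalf t.+1 + 2) (uphalf t.+1 + 2)
  by case.
elim: t => [|t [IHt IHt1]].
  by split; [exact: memories_in0 | exact: memories_in_round_coarse memories_in0].
by split=> //; apply: memories_in_two_rounds IHt; lia.
Qed.

End Memories.

Theorem lemma5p1 (R : realType) (n : nat) (P : problem R n 2) :
  odd_even_preserving P ->
  forall (D : DPM P) (t : nat), Kset R n ((t.+1)./2 + 2) (xout D t).
Proof.
move=> oep D t.
exact/xout_Kset/memories_in_uphalf.
Qed.
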